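(* $\mathrm{PoTF}_{\textsc{Min-Sum}}=\Theta(n)$, i.e., the price of temporal fairness with respect to the \textsc{Min-Sum} objective is both $O(n)$ and $\Omega(n)$ as a function of the number of agents $n$.
   Context: An instance $\mathcal{I}=(N,P,T,(\mathbf{D}_i)_{i\in N})$ has agents $N=[n]$, projects $P$, timesteps $T=[\ell]$, and disapproval sets $D_{ik}\subseteq P$ for $i\in N,k\in T$. An outcome is $\mathbf{o}=(o_1,\dots,o_\ell)\in P^\ell$; $\Pi(\mathcal{I})$ is the set of all outcomes. $d_i(\mathbf{o}^{(k)})=|\{t\in[k]:o_t\in D_{it}\}|$ and $d_i(\mathbf{o})=d_i(\mathbf{o}^{(\ell)})$. A set of constraints is $\mathbf{A}=\{(t_1,\lambda_1),\dots,(t_\tau,\lambda_\tau)\}$ with $t_j\in T$, $\lambda_j\in\{0,\dots,\ell\}$, $t_1\le\dots\le t_\tau$, $\lambda_1\le\dots\le\lambda_\tau$; $\Pi_{\mathbf{A}}(\mathcal{I})$ is the set of outcomes with $\max_{i\in N}d_i(\mathbf{o}^{(t)})\le\lambda$ for all $(t,\lambda)\in\mathbf{A}$, and $\mathbf{A}$ is feasible if $\Pi_{\mathbf{A}}(\mathcal{I})\neq\emptyset$. The \textsc{Min-Sum}-value of $\mathbf{o}$ is $\sum_{i\in N}d_i(\mathbf{o})$. The price of temporal fairness is $\mathrm{PoTF}_{\textsc{Min-Sum}}=\sup_{\mathcal{I},\mathbf{A}\text{ feasible}}\frac{\min_{\mathbf{o}\in\Pi_{\mathbf{A}}(\mathcal{I})}\sum_i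 d_i(\mathbf{o})}{\min_{\mathbf{o}\in\Pi(\mathcal{I})}\sum_i d_i(\mathbf{o})}$, considered as a function of $n$ (supremum over instances with $n$ agents). *)

From mathcomp Require Import all_boot.
Set Implicit Arguments. Unset Strict Implicit. Unset Printing Implicit Defensive.

(* Timestep k in T = [l] = {1,...,l} is represented by the ordinal k-1 : 'I_l.
   D i t is the disapproval set of agent i at (0-based) timestep t. *)
Definition instance (n : nat) (P : finType) (l : nat) := 'I_n -> 'I_l -> {set P}.

Definition outcome (P : finType) (l : nat) := {ffun 'I_l -> P}.

Definition dis_prefix n P l (D : instance n P l) (i : 'I_n) (o : outcome P l) (k : nat) : nat :=
  #|[set t : 'I_l | (t < k) && (o t \in D i t)]|.

Definition dis n P l (D : instance n P l) (i : 'I_n) (o : outcome P l) : nat :=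
  dis_prefix D i o l.

Definition minsum n P l (D : instance n P l) (o : outcome P l) : nat :=
  \sum_(i < n) dis D i o.

(* A set of constraints A = {(t_1,l_1),...,(t_tau,l_tau)} as a sequence of pairs
   (t_j, lambda_j) with t_j in [l] (1-based), lambda_j in {0..l}, and both
   coordinates non-decreasing along the sequence. *)
Definition valid_constraints (l : nat) (A : seq (nat * nat)) : bool :=
  [&& all (fun p => (1 <= p.1 <= l) && (p.2 <= l)) A,
      sorted leq (map fst A) & sorted leq (map snd A)].

Definition satisfies n P l (D : instance n P l) (A : seq (nat * nat)) (o : outcome P l) : Prop :=
  forall p, p \in A -> forall i : 'I_n, dis_prefix D i o p.1 <= p.2.

Definition feasible n P l (D : instance n P l) (A : seq (nat * nat)) : Prop :=
  exists o : outcome P l, satisfies D A o.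

Definition is_min_minsum n P l (D : instance n P l) (Q : outcome P l -> Prop) (v : nat) : Prop :=
  (exists o, Q o /\ minsum D o = v) /\ (forall o, Q o -> v <= minsum D o).

(* Upper bound: let [o'] be any outcome meeting the constraints and [os] an unconstrained
   optimum. Patch [os] by switching to [o'] at every timestep where some agent disapproves
   [os]. No agent gains a disapproval with respect to [o'], so the patch meets the
   constraints; and it can only cost at the contested timesteps, at most [n] per timestep,
   while each contested timestep already costs [os] at least one. This gives [v <= n w]
   without using the validity of the constraints.
   Lower bound: with [n+1] agents and two timesteps, agent 0 disapproves everything at the
   first timestep and [true] at the second, the other [n] agents disapprove [false] at the
   second. The constraint "at most one disapproval up to timestep 2" forces [false], of
   cost [n+1], whereas [true] costs only 2. *)
From mathcomp Require Import all_boot.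

Set Implicit Arguments.
Unset Strict Implicit.
Unset Printing Implicit Defensive.

Lemma card_bigcup_le (I T : finType) (F : I -> {set T}) :
  #|\bigcup_i F i| <= \sum_i #|F i|.
Proof.
elim/big_rec2: _ => [|i s A _ IH]; first by rewrite cards0.
by apply: leq_trans (leq_card_setU _ _) _; rewrite leq_add2l.
Qed.

Section PatchOutcome.

Variables (n : nat) (P : finType) (l : nat) (D : instance n P l).

Lemma dis_card i (o : outcome P l) : dis D i o = #|[set t | o t \in D i t]|.
Proof. by apply: eq_card => t; rewrite !inE ltn_ord. Qed.

Definition contested (o : outcome P l) : {set 'I_l} :=
  \bigcup_(i < n) [set t | o t \in D i t].

Lemma mem_contested i (o : outcome P l) t : o t \in D i t -> t \in contested o.
Proof. by move=> oDt; apply/bigcupP; exists i; rewrite ?inE. Qed.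

Lemma card_contested_le_minsum o : #|contested o| <= minsum D o.
Proof.
apply: leq_trans (card_bigcup_le _) _.
by rewrite /minsum; under [X in _ <= X]eq_bigr do rewrite dis_card.
Qed.

Definition patch (o' os : outcome P l) : outcome P l :=
  [ffun t => if t \in contested os then o' t else os t].

Lemma patch_disapproved o' os i t :
  patch o' os t \in D i t -> (t \in contested os) && (o' t \in D i t).
Proof.
rewrite ffunE; case: ifP => [_ -> // | /negbT notC osDt].
by rewrite (mem_contested osDt) in notC.
Qed.

Lemma dis_prefix_patch_le o' os i k :
  dis_prefix D i (patch o' os) k <= dis_prefix D i o' k.
Proof.
apply/subset_leq_card/subsetP => t; rewrite !inE.
by case/andP=> -> /patch_disapproved/andP[_ ->].
Qed.

Lemma satisfies_patch A o' os : satisfies D A o' -> satisfies D A (patch o' os).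
Proof. move=> so' p pA i; exact: leq_trans (dis_prefix_patch_le _ _ _ _) (so' p pA i). Qed.

Lemma dis_patch_le o' os i : dis D i (patch o' os) <= #|contested os|.
Proof.
apply/subset_leq_card/subsetP => t; rewrite !inE.
by case/andP=> _ /patch_disapproved/andP[].
Qed.

Lemma minsum_patch_le o' os : minsum D (patch o' os) <= n * minsum D os.
Proof.
apply: (@leq_trans (\sum_(i < n) #|contested os|)).
  by apply: leq_sum => i _; exact: dis_patch_le.
by rewrite sum_nat_const card_ord leq_mul2l card_contested_le_minsum orbT.
Qed.

Lemma constrained_min_le A v w :
  is_min_minsum D (satisfies D A) v -> is_min_minsum D (fun _ => True) w ->
  v <= n * w.
Proof.
move=> [[o' [so' _]] minv] [[os [_ <-]] _].
exact: leq_trans (minv _ (satisfies_patch os so')) (minsum_patch_le o' os).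
Qed.

End PatchOutcome.

Section LowerBoundInstance.

Variable n : nat.

Definition lb_instance : instance n.+1 bool 2 := fun i t =>
  if t == ord0 then (if i == ord0 then setT else set0)
  else (if i == ord0 then [set true] else [set false]).

Lemma dis_lb_instance i (o : outcome bool 2) :
  dis lb_instance i o = if i == ord0 then (o ord_max).+1 else ~~ o ord_max.
Proof.
rewrite dis_card -sum1dep_card big_mkcond !big_ord_recl big_ord0 /lb_instance /=.
rewrite (_ : lift ord0 ord0 = ord_max :> 'I_2); last exact: val_inj.
by case: (i == ord0); rewrite !inE; case: (o ord_max).
Qed.

Lemma minsum_lb_instance o : minsum lb_instance o = if o ord_max then 2 else n.+1.
Proof.
rewrite /minsum big_ord_recl dis_lb_instance eqxx.
under eq_bigr do rewrite dis_lb_instance eq_sym (negbTE (neq_lift _ _)).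
by rewrite sum_nat_const card_ord; case: (o ord_max); rewrite ?muln0 ?muln1.
Qed.

Definition lb_constraints : seq (nat * nat) := [:: (2, 1)].

Lemma satisfies_lb_instanceP o :
  satisfies lb_instance lb_constraints o <-> o ord_max = false.
Proof.
split=> [so | o_false p].
  have := so _ (mem_head _ _) ord0.
  by rewrite [dis_prefix _ _ _ _]dis_lb_instance eqxx; case: (o ord_max).
rewrite inE => /eqP -> i /=.
by rewrite [dis_prefix _ _ _ _]dis_lb_instance o_false; case: (i == ord0).
Qed.

Lemma constrained_min_lb_instance :
  is_min_minsum lb_instance (satisfies lb_instance lb_constraints) n.+1.
Proof.
split=> [|o /satisfies_lb_instanceP o_false].
  exists [ffun => false]; rewrite minsum_lb_instance ffunE.
  by split=> //; apply/satisfies_lb_instanceP; rewrite ffunE.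
by rewrite minsum_lb_instance o_false.
Qed.

Lemma unconstrained_min_lb_instance :
  0 < n -> is_min_minsum lb_instance (fun _ => True) 2.
Proof.
move=> n_gt0; split=> [|o _].
  by exists [ffun => true]; rewrite minsum_lb_instance ffunE.
by rewrite minsum_lb_instance; case: (o ord_max).
Qed.

End LowerBoundInstance.

Theorem theorem7 :
  (exists C : nat,
     forall (n : nat) (P : finType) (l : nat) (D : instance n P l) (A : seq (nat * nat)),
       valid_constraints l A -> feasible D A ->
       forall v w : nat,
         is_min_minsum D (satisfies D A) v ->
         is_min_minsum D (fun _ => True) w ->
         v <= C * n * w)
  /\
  (exists (c N : nat), 0 < c /\
     forall n : nat, N <= n ->
       exists (P : finType) (l : nat) (D : instance n P l) (A : seq (nat * nat)),
         valid_constraints l A /\ feasible D A /\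
         exists v w : nat,
           is_min_minsum D (satisfies D A) v /\
           is_min_minsum D (fun _ => True) w /\
           0 < w /\ n * w <= c * v).
Proof.
split.
  by exists 1 => n P l D A _ _ v w; rewrite mul1n; exact: constrained_min_le.
exists 2, 2; split=> // [[|m]] // m_gt0.
have feasible_lb : feasible (@lb_instance m) lb_constraints.
  by exists [ffun => false]; apply/satisfies_lb_instanceP; rewrite ffunE.
exists bool, 2, (@lb_instance m), lb_constraints; do 2!split=> //.
exists m.+1, 2; split; first exact: constrained_min_lb_instance.
by split; [exact: unconstrained_min_lb_instance | rewrite mulnC].
Qed.
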